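(* Let $\Bbbk$ be a field, $R=\Bbbk[x_1,\dots,x_m]$ with the standard $\mathbb Z^m$-grading, $P$ a finite poset, and $\deg\colon P\to\mathbb N^m$ a morphism of posets. Let $\widehat{\mathcal F}_\bullet$ be the homogenization of $\mathcal C_\bullet(P,\Bbbk)$ with respect to $\deg$, and let $I\subseteq R$ be the monomial ideal generated by $x^{\deg a}$ for $a$ minimal in $P$. Then $\widehat{\mathcal F}_\bullet$, augmented by the map $\widehat F_0\to I$ sending $[a]\otimes 1\mapsto x^{\deg a}$ for each minimal $a\in P$, is a free resolution of $I$ if and only if the augmented conic chain complex $\widetilde{\mathcal C}_\bullet(P_{\deg\le\alpha},\Bbbk)$ is exact for every $\alpha\in\mathbb Z^m$ such that $P_{\deg\le\alpha}$ is nonempty.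
   Context: For a finite poset $P$ and $a\in P$: $P_{\le a}=\{x: x\le a\}$, $P_{<a}=\{x:x<a\}$, $\Delta(S)$ the order complex, $d(a)=\dim\Delta(P_{\le a})$, $P^n=\{a: d(a)\le n\}$, $\Delta^n=\Delta(P^n)$ ($\Delta^{-1}=\emptyset$), faces oriented by decreasing order of vertices. Conic chain complex: $\mathcal C_n(P,\Bbbk)=H_n(\Delta^n,\Delta^{n-1};\Bbbk)=\bigoplus_{d(a)=n}H_n(\Delta(P_{\le a}),\Delta(P_{<a});\Bbbk)$ for $n\ge0$, with differential $\partial_n=\iota_{n-1}\circ\delta_n$ ($\delta_n$ the connecting map of the pair $(\Delta^n,\Delta^{n-1})$, $\iota_{n-1}\colon\widetilde H_{n-1}(\Delta^{n-1})\to H_{n-1}(\Delta^{n-1},\Delta^{n-2})$ the natural map). Note $\mathcal C_0(P,\Bbbk)=\bigoplus_{a\in P^0}\Bbbk[a]$ where $P^0$ is the set of minimal elements. The augmented conic chain complex $\widetilde{\mathcal C}_\bullet(P,\Bbbk)$ adds $\mathcal C_{-1}=\Bbbk\cdot[\,]$ (the empty face) and $\partial_0([a])=[\,]$. $\mathcal C_\bullet(P,\Bbbk)$ is $P$-graded: $F_{n,a}=H_{n}(\Delta(P_{\le a}),\Delta(P_{<a});\Bbbk)$ if $n=d(a)$ and $0$ otherwise; for $x\in F_{n,a}$ write $f_n^b(x)$ for the component of $\partial_n(x)$ in $F_{n-1,b}$ (nonzero only if $b\le a$). The homogenization with respect to $\deg$ is the complex of $\mathbb Z^m$-graded $R$-modules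 with $\widehat F_n=\bigoplus_{a\in P}F_{n,a}\otimes_\Bbbk R(-\deg a)$ and $\hat f_n(x\otimes1)=\sum_{b\le a}f_n^b(x)\otimes x^{\deg a-\deg b}$ for $x\in F_{n,a}$. For $\alpha\in\mathbb Z^m$, $P_{\deg\le\alpha}=\{x\in P:\deg x\le\alpha\}$ (componentwise order) with the induced order. *)

From HB Require Import structures.
From mathcomp Require Import all_boot all_order all_algebra.
Set Implicit Arguments. Unset Strict Implicit. Unset Printing Implicit Defensive.
Import Order.TTheory GRing.Theory.
Local Open Scope ring_scope.

(* Exponent vectors in N^m (monomials x^beta of R = K[x_1..x_m]). *)
Definition mon (m : nat) := {ffun 'I_m -> nat}.
Definition mle (m : nat) (a b : mon m) : bool := [forall i, (a i <= b i)%N].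
Definition madd (m : nat) (a b : mon m) : mon m := [ffun i => (a i + b i)%N].
Definition msub (m : nat) (a b : mon m) : mon m := [ffun i => (a i - b i)%N].

Section Conic.
Variables (disp : Order.disp_t) (T : finPOrderType disp) (K : fieldType).

(* simplicial chains (k-valued functions on faces = finite subsets of T) *)
Definition chainK := {ffun {set T} -> K}.

(* faces of the order complex: totally ordered subsets *)
Definition is_chain (c : {set T}) : bool :=
  [forall x in c, forall y in c, (x <= y)%O || (y <= x)%O].

Definition topis (a : T) (c : {set T}) : bool :=
  (a \in c) && [forall u in c, (u <= a)%O].

Definition minimal (a : T) : bool := [forall b, (b <= a)%O ==> (b == a)].

(* d_S(a) = dim Delta(S_{<= a}) for the subposet S (induced order), a in S *)
Definition dim_below (S : {set T}) (a : T) : nat :=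
  (\max_(c : {set T} | [&& c \subset S, is_chain c & [forall x in c, (x <= a)%O]])
      #|c|.-1)%N.

(* n-faces of Delta^n(S) = Delta(S^n) *)
Definition face_in (S : {set T}) (n : nat) (c : {set T}) : bool :=
  [&& c \subset S, is_chain c, #|c| == n.+1
    & [forall x in c, (dim_below S x <= n)%N]].

(* n-faces of Delta^n(S) not lying in Delta^{n-1}(S) (Delta^{-1} = empty) *)
Definition rel_face (S : {set T}) (n : nat) (c : {set T}) : bool :=
  face_in S n c && ~~ [forall x in c, (dim_below S x < n)%N].

(* simplicial boundary, faces oriented by decreasing order of vertices:
   removing vertex v contributes (-1)^(number of vertices above v) *)
Definition bd (c : chainK) (t : {set T}) : K :=
  \sum_(s : {set T}) \sum_(v in s | t == s :\ v)
     (-1) ^+ #|[set u in s | (v < u)%O]| * c s.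

(* C_n(S,K) = H_n(Delta^n, Delta^{n-1}; K), realised as the relative n-cycles
   (there are no relative (n+1)-chains, so no boundaries to quotient by):
   n-chains supported on faces of Delta^n not in Delta^{n-1} whose boundary
   vanishes on the (n-1)-faces of Delta^n not in Delta^{n-1}. *)
Definition conic (S : {set T}) (n : nat) (c : chainK) : Prop :=
  (forall s : {set T}, c s != 0 -> rel_face S n s) /\
  (forall t : {set T}, (0 < n)%N ->
     [&& t \subset S, is_chain t, #|t| == n,
         [forall x in t, (dim_below S x <= n)%N]
       & ~~ [forall x in t, (dim_below S x < n)%N]] ->
     bd c t = 0).

(* conic differential partial_n = iota_{n-1} o delta_n (n >= 1): the boundary,
   read in H_{n-1}(Delta^{n-1},Delta^{n-2}) i.e. restricted to the faces of
   Delta^{n-1} not in Delta^{n-2}. *)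
Definition Dc (S : {set T}) (n : nat) (c : chainK) : chainK :=
  [ffun t => if rel_face S n.-1 t then bd c t else 0].

(* exactness of the augmented conic chain complex of the subposet S;
   C_{-1} = K.[ ] and partial_0 [a] = [ ], i.e. partial_0 c = bd c set0 *)
Definition aug_conic_exact (S : {set T}) : Prop :=
  (forall l : K, exists c, conic S 0 c /\ bd c set0 = l) /\
  (forall c, conic S 0 c ->
     (bd c set0 = 0 <-> exists c', conic S 1 c' /\ Dc S 1 c' = c)) /\
  (forall n c, (0 < n)%N -> conic S n c ->
     (Dc S n c = 0 <-> exists c', conic S n.+1 c' /\ Dc S n.+1 c' = c)).

Variables (m : nat) (deg : T -> mon m).

Definition Fna (n : nat) (a : T) (c : chainK) : Prop :=
  conic setT n c /\ (forall s : {set T}, c s != 0 -> topis a s).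

Definition fb (b : T) (c : chainK) : chainK :=
  [ffun t => if topis b t then c t else 0].

(* An element of hat F_n = (+)_a F_{n,a} (x)_K R(-deg a) is a family
   h a beta in F_{n,a} (coefficient of x^beta in the a-summand),
   finitely supported in beta. *)
Definition homF (n : nat) (h : T -> mon m -> chainK) : Prop :=
  (forall a beta, Fna n a (h a beta)) /\
  (exists s : seq (mon m), forall a beta, beta \notin s -> h a beta = 0).

(* hat f_n (x (x) x^beta) = sum_{b <= a} f^b(x) (x) x^(beta + deg a - deg b) *)
Definition fhat (n : nat) (h : T -> mon m -> chainK) : T -> mon m -> chainK :=
  fun b gamma =>
    \sum_(a | (b <= a)%O && mle (msub (deg a) (deg b)) gamma)
        fb b (Dc setT n (h a (msub gamma (msub (deg a) (deg b))))).

(* R = K[x_1..x_m]: a polynomial is its (finitely supported) coefficient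
   function mon m -> K.  Augmentation [a] (x) x^beta |-> x^(beta + deg a). *)
Definition eps (h : T -> mon m -> chainK) : mon m -> K :=
  fun gamma => \sum_(a | minimal a && mle (deg a) gamma)
                 h a (msub gamma (deg a)) [set a].

Definition inI (p : mon m -> K) : Prop :=
  exists r : T -> mon m -> K,
    (exists s : seq (mon m), forall a beta, beta \notin s -> r a beta = 0) /\
    (forall gamma, p gamma =
       \sum_(a | minimal a && mle (deg a) gamma) r a (msub gamma (deg a))).

(* hat F, augmented by eps : hat F_0 -> I, is a free resolution of I
   (the modules are free by construction): exactness everywhere. *)
Definition is_free_resolution : Prop :=
  (forall h, homF 0 h -> inI (eps h)) /\
  (forall p, inI p -> exists h, homF 0 h /\ forall gamma, eps h gamma = p gamma) /\
  (forall h, homF 0 h ->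
     ((forall gamma, eps h gamma = 0) <->
      exists h', homF 1 h' /\ forall a beta, fhat 1 h' a beta = h a beta)) /\
  (forall n h, (0 < n)%N -> homF n h ->
     ((forall a beta, fhat n h a beta = 0) <->
      exists h', homF n.+1 h' /\ forall a beta, fhat n.+1 h' a beta = h a beta)).

End Conic.

Definition Pdeg_le (disp : Order.disp_t) (T : finPOrderType disp) (m : nat)
  (deg : T -> mon m) (alpha : 'I_m -> int) : {set T} :=
  [set x | [forall i, ((deg x i)%:Z <= alpha i)%R]].

(* The homogenized complex is graded by N^m, and its strand in degree d is the
   conic chain complex of the down-set P_{deg <= d}: the summand F_{n,a} (x) x^beta
   lies in degree beta + deg a, so an element of the strand is a conic chain of
   P_{deg <= d} split according to the top vertices of its faces ([strand] and
   [glue] are mutually inverse), and conic chains and differentials of a down-set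
   are those computed in P.  Hence exactness of the homogenization, and of its
   augmentation onto I, amounts to exactness of every augmented complex
   C~(P_{deg <= d}); a degree alpha with a negative entry has P_{deg <= alpha}
   empty and imposes nothing. *)

From HB Require Import structures.
From mathcomp Require Import all_boot all_order all_algebra.
From Stdlib Require Import ClassicalEpsilon.
Set Implicit Arguments. Unset Strict Implicit. Unset Printing Implicit Defensive.
Import Order.TTheory GRing.Theory.

Section Poset.
Variables (disp : Order.disp_t) (T : finPOrderType disp).
Implicit Types (a b x y : T) (S c s t : {set T}).

Lemma topis_in a s : topis a s -> a \in s.
Proof. by case/andP. Qed.

Lemma topis_le a s x : topis a s -> x \in s -> (x <= a)%O.
Proof. by case/andP=> _ /forall_inP; apply. Qed.

Lemma topis_uniq a b s : topis a s -> topis b s -> a = b.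
Proof.
by move=> ta tb; apply/le_anti; rewrite (topis_le tb (topis_in ta)) (topis_le ta (topis_in tb)).
Qed.

Lemma topis1 a : topis a [set a].
Proof. by rewrite /topis set11; apply/forall_inP=> x /set1P->. Qed.

Lemma is_chainU1 c x : is_chain c -> (forall y, y \in c -> (y <= x)%O) -> is_chain (x |: c).
Proof.
move=> /forall_inP ch le_x; apply/forall_inP=> y /setU1P[->|yc];
  apply/forall_inP=> z /setU1P[->|zc]; rewrite ?lexx ?le_x ?orbT //.
exact: (forall_inP (ch y yc)).
Qed.

Lemma dim_below_lt S x y : (x < y)%O -> x \in S -> y \in S ->
  (dim_below S x < dim_below S y)%N.
Proof.
move=> lt_xy xS yS; set P := fun c => [&& c \subset S, is_chain c & [forall z in c, (z <= x)%O]].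
have P0 : P set0.
  by rewrite /P sub0set /= /is_chain; apply/andP; split; apply/forall_inP=> z; rewrite inE.
rewrite /dim_below (bigop.bigmax_eq_arg set0 P0); set c := [arg max_(i > set0 | _) _].
have /and3P[cS ch /forall_inP c_le] : P c by rewrite /c; case: arg_maxnP.
have le_xy := ltW lt_xy.
have yc : y \notin x |: c.
  apply: contraL lt_xy => /setU1P[<-|/c_le le_yx]; first by rewrite ltxx.
  by rewrite lt_leAnge le_yx andbF.
have below_y : forall z, z \in x |: c -> (z <= y)%O.
  by move=> z /setU1P[->//|/c_le le_zx]; apply: le_trans le_xy.
pose Py c := [&& c \subset S, is_chain c & [forall z in c, (z <= y)%O]].
have Pyxc : Py (y |: (x |: c)).
  rewrite /Py !subUset !sub1set yS xS cS is_chainU1 ?is_chainU1 //.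
  by apply/forall_inP=> z /setU1P[->|/below_y].
apply: leq_trans _ (bigop.leq_bigmax_cond (P := Py) (F := fun c => #|c|.-1) _ Pyxc).
rewrite cardsU1 yc add1n /=.
have : (0 < #|x |: c|)%N by apply/card_gt0P; exists x; rewrite setU11.
by case: #|c| (subset_leq_card (subsetUr [set x] c)).
Qed.

Lemma dim_below_setT_lt x y : (x < y)%O -> (dim_below setT x < dim_below setT y)%N.
Proof. by move=> lt_xy; rewrite dim_below_lt ?inE. Qed.

Lemma chain_top s : is_chain s -> s != set0 -> exists a, topis a s.
Proof.
move=> /forall_inP ch /set0Pn[a0 a0s].
have [a a_s a_max] := arg_maxnP (dim_below setT) a0s; exists a.
apply/andP; split=> //; apply/forall_inP=> u us.
have /orP[//|le_au] := forall_inP (ch u us) a a_s.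
case: (eqVneq u a) => [->//|ne_ua].
have := a_max u us; rewrite /= leqNgt dim_below_setT_lt //.
by rewrite lt_neqAle eq_sym ne_ua.
Qed.

Lemma exists_minimal_le x : exists2 a, (a <= x)%O & minimal a.
Proof.
have [a le_ax a_min] := arg_minnP (P := fun a => (a <= x)%O) (dim_below setT) (lexx x).
exists a => //.
apply/forallP=> b; apply/implyP=> le_ba; apply: contraT => ne_ba.
have := a_min b (le_trans le_ba le_ax); rewrite /= leqNgt dim_below_setT_lt //.
by rewrite lt_neqAle ne_ba.
Qed.

Lemma dim_below_minimal S a : minimal a -> dim_below S a = 0%N.
Proof.
move=> /forallP a_min; apply/eqP; rewrite -leqn0.
apply/bigmax_leqP=> c /and3P[_ _ /forall_inP c_le].
have /subset_leq_card : c \subset [set a].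
  by apply/subsetP=> z zc; rewrite inE; apply: (implyP (a_min z)); apply: c_le.
by rewrite cards1; case: #|c| => [|[]].
Qed.

Lemma dim_below0_minimal a : dim_below setT a = 0%N -> minimal a.
Proof.
move=> dim0; apply/forallP=> b; apply/implyP=> le_ba; apply: contraT => ne_ba.
by have := @dim_below_setT_lt b a; rewrite lt_neqAle ne_ba le_ba dim0 => /(_ isT).
Qed.

Definition downset S := forall x y, (x <= y)%O -> y \in S -> x \in S.

Lemma topis_subset S a s : downset S -> a \in S -> topis a s -> s \subset S.
Proof. by move=> dS aS ta; apply/subsetP=> x /(topis_le ta)/dS; apply. Qed.

Lemma dim_below_down S x : downset S -> x \in S -> dim_below S x = dim_below setT x.
Proof.
move=> dS xS; apply: eq_bigl => c; rewrite subsetT /=.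
apply/and3P/andP=> [[_ -> ->] //|[ch c_le]]; split=> //.
by apply/subsetP=> z /(forall_inP c_le)/dS; apply.
Qed.

Lemma forall_dim_below_down S s (f : nat -> bool) : downset S -> s \subset S ->
  [forall x in s, f (dim_below S x)] = [forall x in s, f (dim_below setT x)].
Proof.
by move=> dS sS; apply: eq_forallb_in => x xs; rewrite dim_below_down // (subsetP sS).
Qed.

Lemma rel_face_down S n s : downset S -> s \subset S -> rel_face S n s = rel_face setT n s.
Proof.
move=> dS sS; rewrite /rel_face /face_in sS subsetT.
by rewrite (forall_dim_below_down (leq^~ n)) // (forall_dim_below_down (ltn^~ n)).
Qed.

Lemma rel_face_subset S n s : rel_face S n s -> s \subset S.
Proof. by case/andP=> /and4P[]. Qed.

Lemma rel_face_top S n s : rel_face S n s -> exists2 a, topis a s & a \in S.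
Proof.
case/andP=> /and4P[sS ch /eqP card_s _] _.
have [|a ta] := chain_top ch; first by rewrite -card_gt0 card_s.
by exists a => //; apply: (subsetP sS); apply: topis_in ta.
Qed.

Lemma rel_face_min S a : a \in S -> minimal a -> rel_face S 0 [set a].
Proof.
move=> aS a_min; rewrite /rel_face /face_in sub1set aS cards1 /=.
apply/andP; split; last by apply/forall_inPn; exists a; rewrite ?inE.
apply/andP; split; apply/forall_inP=> x /set1P->; last by rewrite dim_below_minimal.
by apply/forall_inP=> y /set1P->; rewrite lexx.
Qed.

Lemma rel_face0_minimal a : rel_face setT 0 [set a] -> minimal a.
Proof.
case/andP=> /and4P[_ _ _ /forall_inP dim_le] _.
by apply: dim_below0_minimal; apply/eqP; rewrite -leqn0 dim_le ?inE.
Qed.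

Definition bd_face S n t :=
  [&& t \subset S, is_chain t, #|t| == n,
      [forall x in t, (dim_below S x <= n)%N] & ~~ [forall x in t, (dim_below S x < n)%N]].

Lemma bd_face_down S n t : downset S -> t \subset S -> bd_face S n t = bd_face setT n t.
Proof.
move=> dS tS; rewrite /bd_face tS subsetT.
by rewrite (forall_dim_below_down (leq^~ n)) // (forall_dim_below_down (ltn^~ n)).
Qed.

Lemma topis_subset_eq a0 a s t : topis a0 s -> a0 \in t -> t \subset s ->
  topis a t = topis a s.
Proof.
move=> ta0 a0t ts; apply/idP/idP=> ta.
  suff -> : a = a0 by [].
  by apply/le_anti; rewrite (topis_le ta a0t) (topis_le ta0 (subsetP ts _ (topis_in ta))).
rewrite (topis_uniq ta ta0) /topis a0t; apply/forall_inP=> x /(subsetP ts).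
exact: topis_le.
Qed.

(* The top of a relative n-face is never the vertex removed to reach a face
   carrying a vertex of dimension >= n: everything below the top has dimension
   < n. *)
Lemma topis_bd_face S n a s t v : rel_face S n s -> bd_face S n t ->
  v \in s -> t = s :\ v -> topis a t = topis a s.
Proof.
move=> rs tf vs ts; have [a0 ta0 a0S] := rel_face_top rs.
case/and5P: tf => _ _ _ _ /forall_inPn[y yt]; rewrite -leqNgt => n_le_y.
case/andP: rs => /and4P[sS _ _ /forall_inP dim_le] _.
have /setD1P[ne_yv ys] : y \in s :\ v by rewrite -ts.
have a0t : a0 \in t.
  rewrite ts !inE (topis_in ta0) andbT; apply/eqP=> a0v.
  have lt_ya0 : (y < a0)%O by rewrite lt_neqAle (topis_le ta0 ys) andbT a0v.
  have := leq_trans (dim_below_lt lt_ya0 (subsetP sS y ys) a0S) (dim_le a0 (topis_in ta0)).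
  by rewrite ltnNge n_le_y.
by rewrite (topis_subset_eq a ta0 a0t) // ts subD1set.
Qed.

End Poset.

Section Chains.
Variables (disp : Order.disp_t) (T : finPOrderType disp) (K : fieldType).
Local Notation chainK := (chainK T K).
Implicit Types (a b : T) (S s t : {set T}) (c : chainK).
Local Open Scope ring_scope.

Lemma bdD c1 c2 t : bd (c1 + c2) t = bd c1 t + bd c2 t.
Proof.
rewrite /bd -big_split; apply: eq_bigr => s _; rewrite -big_split.
by apply: eq_bigr => v _; rewrite ffunE mulrDr.
Qed.

Lemma bd0 t : bd (0 : chainK) t = 0.
Proof. by rewrite /bd big1 // => s _; rewrite big1 // => v _; rewrite ffunE mulr0. Qed.

Lemma bd_sum I (r : seq I) (P : pred I) (F : I -> chainK) t :
  bd (\sum_(i <- r | P i) F i) t = \sum_(i <- r | P i) bd (F i) t.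
Proof. exact: (big_morph (fun c => bd c t) (fun c1 c2 => bdD c1 c2 t) (bd0 t)). Qed.

Lemma Dc0 S n : Dc S n (0 : chainK) = 0.
Proof. by apply/ffunP=> t; rewrite !ffunE bd0 if_same. Qed.

Lemma Dc_sum S n I (r : seq I) (P : pred I) (F : I -> chainK) :
  Dc S n (\sum_(i <- r | P i) F i) = \sum_(i <- r | P i) Dc S n (F i).
Proof.
apply: (big_morph _ _ (Dc0 S n)) => c1 c2.
by apply/ffunP=> t; rewrite !ffunE bdD; case: ifP; rewrite ?addr0.
Qed.

Lemma fb0 b : fb b (0 : chainK) = 0.
Proof. by apply/ffunP=> t; rewrite !ffunE if_same. Qed.

Lemma fb_sum b I (r : seq I) (P : pred I) (F : I -> chainK) :
  fb b (\sum_(i <- r | P i) F i) = \sum_(i <- r | P i) fb b (F i).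
Proof.
apply: (big_morph _ _ (fb0 b)) => c1 c2.
by apply/ffunP=> t; rewrite !ffunE; case: ifP; rewrite ?addr0.
Qed.

Lemma bd_neq0 c t : bd c t != 0 -> exists2 s, c s != 0 & t \subset s.
Proof.
move=> bd_ne0; suff /existsP[s /andP[cs ts]] : [exists s, (c s != 0) && (t \subset s)].
  by exists s.
apply: contraNT bd_ne0 => /existsPn no_s; apply/eqP/big1 => s _.
apply: big1 => v /andP[vs /eqP ts].
by have := no_s s; rewrite ts subD1set andbT negbK => /eqP->; rewrite mulr0.
Qed.

Lemma bd_set0 c : bd c set0 = \sum_a c [set a].
Proof.
have set1E s a : (a \in s) && (set0 == s :\ a) = (s == [set a]).
  by rewrite eq_sym setD_eq0 eqEsubset sub1set andbC.
rewrite /bd (eq_bigr (fun s => \sum_(a | s == [set a]) c [set a])); last first.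
  move=> s _; apply: eq_big => [a|a]; first exact: set1E.
  rewrite set1E => /eqP->; rewrite (_ : [set u in [set a] | (a < u)%O] = set0) ?cards0 ?mul1r //.
  by apply/setP=> u; rewrite !inE; case: eqP => // ->; rewrite ltxx.
rewrite (exchange_big_dep xpredT) //=.
by apply: eq_bigr => a _; rewrite (big_pred1 [set a]).
Qed.

Lemma conic0 S n : conic S n (0 : chainK).
Proof. by split=> [s|t _ _]; rewrite ?ffunE ?eqxx ?bd0. Qed.

Lemma conic_sum S n I (r : seq I) (P : pred I) (F : I -> chainK) :
  (forall i, P i -> conic S n (F i)) -> conic S n (\sum_(i <- r | P i) F i).
Proof.
move=> conicF; elim/big_rec: _ => [|i c Pi [supp cyc]]; first exact: conic0.
have [suppF cycF] := conicF i Pi; split=> [s|t n_gt0 tf]; last by rewrite bdD cycF ?cyc ?addr0.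
by rewrite ffunE; case: (eqVneq (F i s) 0) => [->|/suppF //]; rewrite add0r => /supp.
Qed.

Lemma conic_top S n c s : conic S n c -> c s != 0 -> exists2 a, topis a s & a \in S.
Proof. by case=> supp _ /supp/rel_face_top. Qed.

Lemma conic_subset S n c s : conic S n c -> c s != 0 -> s \subset S.
Proof. by case=> supp _ /supp/rel_face_subset. Qed.

Lemma conic_down S n c : downset S -> (forall s, c s != 0 -> s \subset S) ->
  conic S n c <-> conic setT n c.
Proof.
move=> dS cS; split=> -[supp cyc]; split=> [s cs|t n_gt0 tf].
- by rewrite -(rel_face_down _ dS) ?supp ?cS.
- have [/bd_neq0[s cs ts]|] := boolP (bd c t != 0); last by rewrite negbK => /eqP.
  have tS := subset_trans ts (cS s cs).
  by apply: cyc; rewrite // -/(bd_face S n t) (bd_face_down n dS tS).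
- by rewrite (rel_face_down _ dS) ?supp ?cS.
- have tS : t \subset S by case/andP: tf.
  by apply: cyc; rewrite // -/(bd_face setT n t) -(bd_face_down n dS tS).
Qed.

Lemma Dc_down S n c : downset S -> (forall s, c s != 0 -> s \subset S) ->
  Dc S n c = Dc setT n c.
Proof.
move=> dS cS; apply/ffunP=> t; rewrite !ffunE.
have [/bd_neq0[s cs ts]|] := boolP (bd c t != 0); last by rewrite negbK => /eqP->; rewrite !if_same.
by rewrite rel_face_down // (subset_trans ts (cS s cs)).
Qed.

Lemma Dc_rel_face S n c t : Dc S n c t != 0 -> rel_face S n.-1 t.
Proof. by rewrite ffunE; case: ifP => // _; rewrite eqxx. Qed.

Lemma conic_fb S n a c : conic S n c -> conic S n (fb a c).
Proof.
case=> supp cyc; split=> [s|t n_gt0 tf].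
  by rewrite ffunE; case: ifP => _; [apply: supp | rewrite eqxx].
have fbE s v : v \in s -> t = s :\ v -> fb a c s = if topis a t then c s else 0.
  move=> vs ts; rewrite ffunE; case: (eqVneq (c s) 0) => [->|/supp rs]; first by rewrite !if_same.
  by rewrite (topis_bd_face _ rs tf vs ts).
case: (boolP (topis a t)) => ta.
  rewrite -(cyc t n_gt0 tf); apply: eq_bigr => s _; apply: eq_bigr => v /andP[vs /eqP ts].
  by rewrite (fbE s v vs ts) ta.
apply: big1 => s _; apply: big1 => v /andP[vs /eqP ts].
by rewrite (fbE s v vs ts) (negbTE ta) mulr0.
Qed.

Lemma fb_topped a b c : (forall s, c s != 0 -> topis a s) -> fb b c = if a == b then c else 0.
Proof.
move=> supp; apply/ffunP=> s; rewrite ffunE; case: (eqVneq a b) => [<-|ne_ab].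
  by case: (eqVneq (c s) 0) => [->|/supp->]; rewrite ?if_same.
rewrite ffunE; case: ifP => // tb; case: (eqVneq (c s) 0) => // /supp ta.
by rewrite (topis_uniq ta tb) eqxx in ne_ab.
Qed.

Lemma sum_fb (P : pred T) c : (forall s, c s != 0 -> exists2 a, topis a s & P a) ->
  \sum_(a | P a) fb a c = c.
Proof.
move=> supp; apply/ffunP=> s; rewrite sum_ffunE.
case: (eqVneq (c s) 0) => [cs0|/supp[a ta Pa]].
  by rewrite cs0; apply: big1 => a _; rewrite ffunE cs0 if_same.
rewrite (bigD1 a) //= ffunE ta big1 ?addr0 // => b /andP[_ ne_ba]; rewrite ffunE.
by case: ifP => // tb; rewrite (topis_uniq ta tb) eqxx in ne_ba.
Qed.

Lemma fb_inj c1 c2 : (forall s, c1 s != 0 -> exists a, topis a s) ->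
  (forall s, c2 s != 0 -> exists a, topis a s) -> (forall b, fb b c1 = fb b c2) -> c1 = c2.
Proof.
move=> supp1 supp2 fb_eq; apply/ffunP=> s; have [a ta|no_top] := pickP (fun a => topis a s).
  by have /ffunP/(_ s) := fb_eq a; rewrite !ffunE ta.
have untopped c : (forall s, c s != 0 -> exists a, topis a s) -> c s = 0.
  by move=> supp; apply/eqP; apply: contraT => /supp[a]; rewrite no_top.
by rewrite !untopped.
Qed.

Lemma fb_Dc_nle S n a b c : (forall s, c s != 0 -> topis a s) -> ~~ (b <= a)%O ->
  fb b (Dc S n c) = 0.
Proof.
move=> supp nle_ba; apply/ffunP=> t; rewrite !ffunE; case: ifP => // tb; case: ifP => // _.
apply/eqP; apply: contraNT nle_ba => /bd_neq0[s /supp ta ts].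
by rewrite (topis_le ta (subsetP ts _ (topis_in tb))).
Qed.

Lemma fb_Dc_notin S n b c : b \notin S -> fb b (Dc S n c) = 0.
Proof.
move=> bS; apply/ffunP=> t; rewrite [LHS]ffunE [RHS]ffunE; case: ifP => // tb.
apply/eqP; apply: contraNT bS => /Dc_rel_face/rel_face_subset/subsetP; apply.
exact: topis_in.
Qed.

Definition conic_cycle S n c : Prop :=
  if n is 0 then bd c set0 = 0 else Dc S n c = 0.

Definition conic_boundary S n c : Prop :=
  exists c', conic S n.+1 c' /\ Dc S n.+1 c' = c.

Definition conic_exact_at S n : Prop :=
  forall c, conic S n c -> conic_cycle S n c <-> conic_boundary S n c.

Lemma conic_cycle0 S n : conic_cycle S n 0.
Proof. by case: n => [|n] /=; rewrite ?bd0 ?Dc0. Qed.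

Lemma conic_boundary0 S n : conic_boundary S n 0.
Proof. by exists 0; rewrite Dc0; split; first exact: conic0. Qed.

Lemma conic_exact_at_set0 n : conic_exact_at set0 n.
Proof.
move=> c c_conic; suff -> : c = 0 by split=> _; [apply: conic_boundary0 | apply: conic_cycle0].
apply/ffunP=> s; rewrite ffunE; apply/eqP; apply: contraT => /(conic_top c_conic)[a _].
by rewrite inE.
Qed.

Lemma aug_conic_exactE S : downset S -> S != set0 ->
  aug_conic_exact K S <-> forall n, conic_exact_at S n.
Proof.
move=> dS /set0Pn[x xS]; split=> [[_ [exact0 exactS]] [|n] // c|exact_at].
  exact: exactS.
split; last by split; [exact: (exact_at 0) | move=> [|n] c // _; exact: (exact_at n.+1)].
move=> l; have [a le_ax a_min] := exists_minimal_le x.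
exists [ffun s => if s == [set a] then l else 0]; split.
  split=> [s|//]; rewrite ffunE; case: ifP => [/eqP-> _|_]; last by rewrite eqxx.
  by apply: rel_face_min a_min; apply: dS xS.
rewrite bd_set0 (bigD1 a) //= ffunE eqxx big1 ?addr0 // => b ne_ba.
by rewrite ffunE (inj_eq set1_inj) (negbTE ne_ba).
Qed.

End Chains.

Section Monomials.
Variable m : nat.
Implicit Types a b d g x y : mon m.

Lemma mle_trans x y g : mle x y -> mle y g -> mle x g.
Proof. by move=> /forallP le_xy /forallP le_yg; apply/forallP=> i; apply: leq_trans. Qed.

Lemma mle_maddl a b : mle a (madd b a).
Proof. by apply/forallP=> i; rewrite ffunE leq_addl. Qed.

Lemma maddK a b : msub (madd b a) a = b.
Proof. by apply/ffunP=> i; rewrite !ffunE addnK. Qed.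

Lemma msubK a d : mle a d -> madd (msub d a) a = d.
Proof. by move=> /forallP le_ad; apply/ffunP=> i; rewrite !ffunE subnK. Qed.

Lemma mle_msub x y g : mle (msub x y) g = mle x (madd g y).
Proof. by apply: eq_forallb => i; rewrite !ffunE leq_subLR addnC. Qed.

Lemma msub_msub x y g : mle y x -> msub g (msub x y) = msub (madd g y) x.
Proof. by move=> /forallP le_yx; apply/ffunP=> i; rewrite !ffunE subnBA. Qed.

End Monomials.

Section Strands.
Variables (disp : Order.disp_t) (T : finPOrderType disp) (K : fieldType).
Variables (m : nat) (deg : T -> mon m).
Hypothesis deg_mono : forall x y : T, (x <= y)%O -> mle (deg x) (deg y).
Local Notation chainK := (chainK T K).
Implicit Types (a b : T) (d g : mon m) (c : chainK) (h : T -> mon m -> chainK).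
Local Open Scope ring_scope.

Definition Pdeg d : {set T} := [set x | mle (deg x) d].

Definition strand d h : chainK := \sum_(a | mle (deg a) d) h a (msub d (deg a)).

Definition glue (c : mon m -> chainK) : T -> mon m -> chainK :=
  fun a beta => fb a (c (madd beta (deg a))).

Lemma Pdeg_down d : downset (Pdeg d).
Proof. by move=> x y /deg_mono le_xy; rewrite !inE; apply: mle_trans. Qed.

Lemma homF_topis n h a beta s : homF n h -> h a beta s != 0 -> topis a s.
Proof. by case=> Fh _; case: (Fh a beta) => _; apply. Qed.

Lemma homF0 n : homF n (fun (_ : T) (_ : mon m) => 0 : chainK).
Proof.
split=> [a beta|]; last by exists [::].
by split=> [|s]; [apply: conic0 | rewrite ffunE eqxx].
Qed.

Lemma strand0 d : strand d (fun (_ : T) (_ : mon m) => 0 : chainK) = 0.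
Proof. exact: big1. Qed.

Lemma homF_conic n h a beta : homF n h -> conic setT n (h a beta).
Proof. by case=> Fh _; case: (Fh a beta). Qed.

Lemma strand_conic n h d : homF n h -> conic (Pdeg d) n (strand d h).
Proof.
move=> Fh; apply: conic_sum => a le_ad.
have hS s : h a (msub d (deg a)) s != 0 -> s \subset Pdeg d.
  by move/(homF_topis Fh)/(topis_subset (@Pdeg_down d)); apply; rewrite inE.
exact/(conic_down _ (@Pdeg_down d) hS)/homF_conic.
Qed.

Lemma strand_finsupp n h : homF n h ->
  exists r : seq (mon m), forall d, d \notin r -> strand d h = 0.
Proof.
case=> _ [r hr]; exists [seq madd beta (deg a) | beta <- r, a <- enum T] => d d_notin.
apply: big1 => a le_ad; apply: hr; apply: contra d_notin => in_r.
by rewrite -(msubK le_ad); apply: allpairs_f; rewrite ?mem_enum.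
Qed.

Lemma fb_strand n h a d : homF n h ->
  fb a (strand d h) = if mle (deg a) d then h a (msub d (deg a)) else 0.
Proof.
move=> Fh; rewrite /strand fb_sum.
under eq_bigr => b _ do rewrite (fb_topped a (fun s => @homF_topis n h b _ s Fh)).
rewrite -big_mkcondr; case: ifP => le_ad; [rewrite (big_pred1 a) | rewrite big_pred0] => // b /=;
  by case: eqP => [->|]; rewrite ?andbF ?andbT ?le_ad.
Qed.

Lemma glue_homF n (c : mon m -> chainK) : (forall d, conic (Pdeg d) n (c d)) ->
  (exists r : seq (mon m), forall d, d \notin r -> c d = 0) -> homF n (glue c).
Proof.
move=> cc [r cr]; split=> [a beta|].
  split=> [|s]; last by rewrite ffunE; case: ifP => // _; rewrite eqxx.
  apply/(conic_down _ (@Pdeg_down _)); last exact: conic_fb.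
  by move=> s; rewrite ffunE; case: ifP => _; [apply: conic_subset | rewrite eqxx].
exists [seq msub d (deg a) | d <- r, a <- enum T] => a beta beta_notin.
rewrite /glue cr ?fb0 //; apply: contra beta_notin => in_r.
by rewrite -(maddK (deg a) beta); apply: allpairs_f; rewrite ?mem_enum.
Qed.

Lemma strand_glue n (c : mon m -> chainK) d : (forall d, conic (Pdeg d) n (c d)) ->
  strand d (glue c) = c d.
Proof.
move=> cc; rewrite /strand /glue; under eq_bigr => a le_ad do rewrite (msubK le_ad).
by apply: sum_fb => s /(conic_top (cc d))[a ta]; rewrite inE; exists a.
Qed.

Lemma fhat_strand n h b g : homF n h ->
  fhat deg n h b g = fb b (Dc (Pdeg (madd g (deg b))) n (strand (madd g (deg b)) h)).
Proof.
move=> Fh; set d := madd g (deg b).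
rewrite /strand Dc_sum fb_sum (bigID (fun a => (b <= a)%O)) /= [X in _ + X]big1 ?addr0; last first.
  by move=> a /andP[_]; apply: fb_Dc_nle => s /(homF_topis Fh).
apply: eq_big => [a|a /andP[le_ba]]; first by rewrite mle_msub andbC.
rewrite mle_msub -/d => le_ad; rewrite (msub_msub _ (deg_mono le_ba)) -/d.
rewrite (Dc_down _ (@Pdeg_down d)) // => s /(homF_topis Fh).
by apply: topis_subset (@Pdeg_down d) _; rewrite inE.
Qed.

Lemma eps_strand h g : homF 0 h -> eps deg h g = bd (strand g h) set0.
Proof.
move=> Fh; rewrite /eps /strand bd_sum big_mkcondl /=; apply: eq_bigr => a _.
rewrite bd_set0 (bigD1 a) //= big1 ?addr0 => [|v ne_va]; last first.
  apply/eqP; apply: contraNT ne_va => /(homF_topis Fh)/topis_in.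
  by rewrite inE eq_sym.
case: ifP => // not_min; apply/esym/eqP; apply: contraFT not_min.
by case: (homF_conic a (msub g (deg a)) Fh) => supp _ /supp/rel_face0_minimal.
Qed.

Lemma img_strand n k h h' : homF n h' -> homF k h ->
  (forall a beta, fhat deg n h' a beta = h a beta) <->
  (forall d, Dc (Pdeg d) n (strand d h') = strand d h).
Proof.
move=> Fh' Fh; split=> [img d|img a beta]; last first.
  by rewrite fhat_strand // img (fb_strand _ _ Fh) mle_maddl maddK.
apply: fb_inj => [s /Dc_rel_face/rel_face_top[a ta _]|s /(conic_top (strand_conic d Fh))[a ta _]|b];
  try by exists a.
rewrite (fb_strand _ _ Fh); case: ifP => le_bd; last by apply: fb_Dc_notin; rewrite inE le_bd.
by rewrite -img fhat_strand // msubK.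
Qed.

Definition hat_cycle n h : Prop :=
  if n is 0 then forall g, eps deg h g = 0 else forall a beta, fhat deg n h a beta = 0.

Definition hat_boundary n h : Prop :=
  exists h', homF n.+1 h' /\ forall a beta, fhat deg n.+1 h' a beta = h a beta.

Definition hat_exact_at n : Prop := forall h, homF n h -> hat_cycle n h <-> hat_boundary n h.

Lemma cycle_strand n h : homF n h ->
  hat_cycle n h <-> forall d, conic_cycle (Pdeg d) n (strand d h).
Proof.
case: n => [|n] Fh /=.
  by split=> cyc d; [rewrite -eps_strand | rewrite eps_strand].
have [img0 img0'] := img_strand Fh (homF0 0).
split=> [/img0 cyc d|cyc]; first by rewrite cyc strand0.
by apply: img0' => d; rewrite strand0.
Qed.

Lemma boundary_strand n h : homF n h ->
  hat_boundary n h <-> forall d, conic_boundary (Pdeg d) n (strand d h).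
Proof.
move=> Fh; split=> [[h' [Fh' img]] d|bdr].
  by exists (strand d h'); split; [apply: strand_conic | apply: (img_strand Fh' Fh).1].
(* Choosing [0] over zero strands keeps the glued preimage finitely supported. *)
have /choice[c hc] : forall d, exists c',
    [/\ conic (Pdeg d) n.+1 c', Dc (Pdeg d) n.+1 c' = strand d h & strand d h = 0 -> c' = 0].
  move=> d; have [->|strand_ne0] := eqVneq (strand d h) 0.
    by exists 0; split; rewrite ?Dc0 //; apply: conic0.
  have [c' [cc' Dc']] := bdr d; exists c'; split=> // strand0.
  by rewrite strand0 eqxx in strand_ne0.
have [r hr] := strand_finsupp Fh.
have cc d : conic (Pdeg d) n.+1 (c d) by case: (hc d).
have Fc : homF n.+1 (glue c) by apply: glue_homF => //; exists r => d /hr; case: (hc d).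
exists (glue c); split=> //; apply/(img_strand Fc Fh) => d.
by rewrite (strand_glue _ cc); case: (hc d).
Qed.

Lemma hat_exact_strandsE n : hat_exact_at n <-> forall d, conic_exact_at K (Pdeg d) n.
Proof.
split=> [exact_n d c cc|exact_d h Fh]; last first.
  apply: iff_trans (cycle_strand Fh) _; apply: iff_trans _ (iff_sym (boundary_strand Fh)).
  by split=> H d; apply/(exact_d d _ (strand_conic d Fh)).
pose cd d' := if d' == d then c else 0.
have ccd d' : conic (Pdeg d') n (cd d').
  by rewrite /cd; case: eqP => [->|_]; last apply: conic0.
have Fh : homF n (glue cd).
  by apply: glue_homF => //; exists [:: d] => d'; rewrite inE /cd => /negbTE->.
have at_d (P : mon m -> chainK -> Prop) : (forall d', P d' 0) ->
    (forall d', P d' (strand d' (glue cd))) <-> P d c.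
  move=> P0; split=> [/(_ d)|Pd d']; rewrite (strand_glue _ ccd) /cd ?eqxx //.
  by case: eqP => [->|].
have cycE := at_d (fun d' => conic_cycle (Pdeg d') n) (fun d' => conic_cycle0 K _ n).
have bdE := at_d (fun d' => conic_boundary (Pdeg d') n) (fun d' => conic_boundary0 K _ n).
apply: iff_trans (iff_sym cycE) _; apply: iff_trans (iff_sym (cycle_strand Fh)) _.
exact: iff_trans (exact_n _ Fh) (iff_trans (boundary_strand Fh) bdE).
Qed.

Lemma eps_inI h : homF 0 h -> inI deg (eps deg h).
Proof.
case=> _ [r hr]; exists (fun a beta => h a beta [set a]); split=> // .
by exists r => a beta /hr->; rewrite ffunE.
Qed.

Lemma eps_onto p : inI deg p -> exists h, homF 0 h /\ forall g, eps deg h g = p g.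
Proof.
case=> r [[s rs] pE].
exists (fun a beta => [ffun t => if minimal a && (t == [set a]) then r a beta else 0]).
split; last by move=> g; rewrite pE; apply: eq_bigr => a /andP[a_min _]; rewrite ffunE a_min eqxx.
split=> [a beta|]; last by exists s => a beta /rs r0; apply/ffunP=> t; rewrite !ffunE r0 if_same.
split=> [|t]; last first.
  by rewrite ffunE; case: ifP => [/andP[_ /eqP->] _|_]; [apply: topis1 | rewrite eqxx].
split=> [t|//]; rewrite ffunE; case: ifP => [/andP[a_min /eqP->] _|_]; last by rewrite eqxx.
by apply: rel_face_min; rewrite ?inE.
Qed.

Lemma free_resolutionE : is_free_resolution K deg <-> forall n, hat_exact_at n.
Proof.
split=> [[_ [_ [exact0 exactS]]] [|n] h|exact_at]; [exact: exact0 | exact: exactS |].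
split; first exact: eps_inI.
split; first exact: eps_onto.
by split; [exact: (exact_at 0) | move=> [|n] h // _; exact: (exact_at n.+1)].
Qed.

Lemma Pdeg_le_nat d : Pdeg_le deg (fun i => Posz (d i)) = Pdeg d.
Proof. by apply/setP=> x; rewrite !inE; apply: eq_forallb => i; rewrite lez_nat. Qed.

Lemma Pdeg_leE (alpha : 'I_m -> int) : Pdeg_le deg alpha != set0 ->
  Pdeg_le deg alpha = Pdeg [ffun i => `|alpha i|%N].
Proof.
case/set0Pn=> x; rewrite inE => /forallP deg_x_le; apply/setP=> y; rewrite !inE.
apply: eq_forallb => i; rewrite ffunE -lez_nat gez0_abs //.
exact: le_trans (deg_x_le i).
Qed.

End Strands.

Theorem mainTheorem3 (disp : Order.disp_t) (T : finPOrderType disp)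
  (K : fieldType) (m : nat) (deg : T -> mon m)
  (deg_mono : forall x y : T, (x <= y)%O -> mle (deg x) (deg y)) :
  is_free_resolution K deg <->
  (forall alpha : 'I_m -> int,
     Pdeg_le deg alpha != set0 ->
     aug_conic_exact K (Pdeg_le deg alpha)).
Proof.
apply: iff_trans (free_resolutionE K deg) _.
split=> [exact_at alpha ne|exact_P n].
  have ne' := ne; rewrite (Pdeg_leE ne) in ne' *.
  apply/aug_conic_exactE => // [|n]; first exact: Pdeg_down.
  exact: (hat_exact_strandsE K deg_mono n).1 (exact_at n) _.
apply/(hat_exact_strandsE K deg_mono) => d.
have [->|ne] := eqVneq (Pdeg deg d) set0; first exact: conic_exact_at_set0.
have := exact_P (fun i => Posz (d i)); rewrite Pdeg_le_nat => /(_ ne).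
by move/(aug_conic_exactE K (Pdeg_down deg_mono (d := d)) ne).
Qed.
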